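(* Let $G(n,n_1,n_2,n_3,p_1,p_2,p_3)$ be a three-layer stochastic block model network satisfying the standing assumptions below. Fix any one of the three layers as target layer, and apply RemoveEdge to all communities of the other two layers. Then the (expected) modularity of the target layer's partition in the resulting graph is strictly larger than in the original graph.
   Context: Multi-layer stochastic block model $G(n,n_1,\dots,n_L,p_1,\dots,p_L)$: a random graph on $n$ nodes with $L$ layers. For each layer $l$ the nodes are partitioned into $n_l$ planted communities of size $s_l=n/n_l$; independently for each layer, each pair of distinct nodes in a common community of layer $l$ receives an edge from layer $l$ with probability $p_l$; the graph is the simple union of all generated edges, so a pair lying in a common community of exactly the layers in a set $T$ is an edge with probability $1-\prod_{l\in T}(1-p_l)$. The partitions of different layers are independent: for any $k\ge2$ distinct layers and one community from each, their intersection has $n/(n_{l_1}\cdots n_{l_k})$ nodes (in expectation). Standing assumptions: $n_l\ge4$, $p_l\in[0.05,1]$ for every layer, and $n\ge2\prod_l n_l$. RemoveEdge applied to the communities of a layer $l$ deletes every edge whose two endpoints lie in a common community of layer $l$. Modularity of a layer $l$: for a graph with $e$ edges, if community $i$ of $l$ has $e^i_{ll}$ internal edges, $e^i_{lout}$ edges with exactly one endpoint in it, and $d^i_l=2e^i_{ll}+e^i_{lout}$, then $Q_l=\sum_i\big(\frac{e^i_{ll}}{e}-(\frac{d^i_l}{2e})^2\big)$; in the model all edge counts are replaced by their expected values (all communities of a layer having the same expected counts). *)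

(* Expected-value model of the multi-layer SBM
   G(n, n_1..n_L, p_1..p_L); layers are indexed by 'I_L. *)
From mathcomp Require Import all_boot all_order all_algebra.
Set Implicit Arguments. Unset Strict Implicit. Unset Printing Implicit Defensive.
Import Order.TTheory GRing.Theory Num.Theory.
Local Open Scope ring_scope.

Section SBM.
Variables (R : realFieldType) (L : nat) (n : nat) (nl : 'I_L -> nat).

(* Expected number of unordered pairs of distinct nodes lying in a common
   community of every layer of S: there are prod_{l in S} n_l blocks of
   n / prod_{l in S} n_l nodes each (S = set0 gives all n(n-1)/2 pairs). *)
Definition pairs_all (S : {set 'I_L}) : R :=
  (n%:R / 2) * (n%:R / (\prod_(l in S) nl l)%:R - 1).

(* Expected number of pairs lying in a common community of EXACTLY the
   layers of T (inclusion-exclusion). *)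
Definition pairs_exact (T : {set 'I_L}) : R :=
  \sum_(S : {set 'I_L} | T \subset S) (-1) ^+ #|S :\: T| * pairs_all S.

(* An "edge model": probability that a pair of exact type T is an edge. *)
Definition sbm_prob (p : 'I_L -> R) (T : {set 'I_L}) : R :=
  1 - \prod_(l in T) (1 - p l).

(* RemoveEdge applied to the communities of all layers in D: every pair
   sharing a community of some layer of D loses its edge. *)
Definition remove_edges (D : {set 'I_L}) (w : {set 'I_L} -> R)
  (T : {set 'I_L}) : R := if [disjoint T & D] then w T else 0.

Definition exp_edges (w : {set 'I_L} -> R) : R :=
  \sum_(T : {set 'I_L}) pairs_exact T * w T.

Definition exp_internal (w : {set 'I_L} -> R) (l : 'I_L) : R :=
  \sum_(T : {set 'I_L} | l \in T) pairs_exact T * w T.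

(* per-community expected counts (all n_l communities have equal counts):
   e^i_ll, e^i_lout (each inter-community edge has one endpoint in
   exactly two communities), d^i_l = 2 e^i_ll + e^i_lout *)
Definition e_ll (w : {set 'I_L} -> R) (l : 'I_L) : R :=
  exp_internal w l / (nl l)%:R.
Definition e_lout (w : {set 'I_L} -> R) (l : 'I_L) : R :=
  2 * (exp_edges w - exp_internal w l) / (nl l)%:R.
Definition d_l (w : {set 'I_L} -> R) (l : 'I_L) : R :=
  2 * e_ll w l + e_lout w l.

Definition modularity (w : {set 'I_L} -> R) (l : 'I_L) : R :=
  \sum_(i < nl l) (e_ll w l / exp_edges w - (d_l w l / (2 * exp_edges w)) ^+ 2).

End SBM.

(* In the expected-value model the modularity of a layer [l] equals
   [E_in / E - 1/n_l], because every community of [l] has the same expected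
   degree [2 E / n_l].  After RemoveEdge on all other layers only pairs whose
   type is exactly [{t}] keep their edges, so [E_in = E] and the target
   modularity becomes its maximum [1 - 1/n_t]; before, the pairs of type [{a}]
   for a layer [a <> t] contribute a positive expected number of edges outside
   the communities of [t], so [E_in < E].  Positivity of the expected pair
   counts follows from the closed inclusion-exclusion formula for them; of the
   hypotheses only [0 < p_l <= 1] and [n_l >= 2] are used. *)

From mathcomp Require Import all_boot all_order all_algebra.
From mathcomp Require Import ring.
Import Order.TTheory GRing.Theory Num.Theory.
Local Open Scope ring_scope.

Lemma sum_supersets_signed_prod (R : comPzRingType) (I : finType) (T : {set I})
    (y : I -> R) :
  \sum_(S : {set I} | T \subset S) (-1) ^+ #|S :\: T| * \prod_(i in S) y i
  = \prod_(i in T) y i * \prod_(i in ~: T) (1 - y i).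
Proof.
pose F i := if i \in T then y i else - y i.
pose G i : R := (i \notin T)%:R.
have -> : \prod_(i in T) y i * \prod_(i in ~: T) (1 - y i) = \prod_i (F i + G i).
  rewrite [RHS](bigID (mem T)) /=; congr (_ * _); apply: eq_big => i; rewrite ?inE //.
    by move=> iT; rewrite /F /G iT addr0.
  by move=> /negbTE iT; rewrite /F /G iT addrC.
rewrite bigA_distr big_mkcond; apply: eq_bigr => J _.
case: ifP => [TJ | /negbT/subsetPn[i iT iJ]]; last first.
  by rewrite (bigD1 i) //= (negbTE iJ) /G iT mul0r.
have -> : \prod_i (if i \in J then F i else G i) = \prod_(i in J) F i.
  rewrite [RHS]big_mkcond; apply: eq_bigr => i _; case: ifP => // iJ.
  by rewrite /G (contraFN (subsetP TJ i)) ?iJ.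
have FT : \prod_(i in J :&: T) F i = \prod_(i in J :&: T) y i.
  by apply: eq_bigr => i /setIP[_ iT]; rewrite /F iT.
have FD : \prod_(i in J :\: T) F i = \prod_(i in J :\: T) - y i.
  by apply: eq_bigr => i /setDP[_ /negbTE iT]; rewrite /F iT.
by rewrite (big_setID T) [in RHS](big_setID T) /= FT FD prodrN mulrCA.
Qed.

Lemma disjoint_neq_subset1 (I : finType) (T : {set I}) (t : I) :
  [disjoint T & [set l | l != t]] = (T \subset [set t]).
Proof.
have -> : [set l | l != t] = ~: [set t] by apply/setP => l; rewrite !inE.
by rewrite disjoints_subset setCK.
Qed.

Definition exp_external {R : realFieldType} {L : nat} (n : nat) (nl : 'I_L -> nat)
    (w : {set 'I_L} -> R) (l : 'I_L) : R :=
  \sum_(T : {set 'I_L} | l \notin T) pairs_exact R n nl T * w T.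

Section ExpectedSBM.
Context {R : realFieldType} {L n : nat} {nl : 'I_L -> nat}.

Lemma pairs_exactE (T : {set 'I_L}) :
  pairs_exact R n nl T = n%:R / 2 *
    (n%:R * (\prod_(l in T) (nl l)%:R^-1 * \prod_(l in ~: T) (1 - (nl l)%:R^-1))
     - (T == setT)%:R).
Proof.
rewrite /pairs_exact.
transitivity (n%:R / 2 * (n%:R * \sum_(S : {set 'I_L} | T \subset S)
       (-1) ^+ #|S :\: T| * \prod_(l in S) (nl l)%:R^-1
   - \sum_(S : {set 'I_L} | T \subset S) (-1) ^+ #|S :\: T| * \prod_(l in S) (1 : R))).
  rewrite mulr_sumr -sumrB mulr_sumr; apply: eq_bigr => S _.
  by rewrite /pairs_all natr_prod -prodfV big1_eq; ring.
rewrite !sum_supersets_signed_prod big1_eq mul1r subrr prodr_const expr0n.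
by rewrite cards_eq0 -setCT (inj_eq (@setC_inj _)).
Qed.

Lemma exp_edges_split (w : {set 'I_L} -> R) (l : 'I_L) :
  exp_edges n nl w = exp_internal n nl w l + exp_external n nl w l.
Proof. exact: bigID. Qed.

Lemma modularityE (w : {set 'I_L} -> R) (l : 'I_L) :
  (0 < nl l)%N -> exp_edges n nl w != 0 ->
  modularity n nl w l = exp_internal n nl w l / exp_edges n nl w - (nl l)%:R^-1.
Proof.
move=> nl_gt0 E_neq0; have nl_neq0 : (nl l)%:R != 0 :> R by rewrite pnatr_eq0 -lt0n.
rewrite /modularity sumr_const card_ord /d_l /e_lout /e_ll -mulr_natr.
by field; rewrite nl_neq0 E_neq0.
Qed.

Lemma modularity_remove_others (w : {set 'I_L} -> R) (t : 'I_L) :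
  (0 < nl t)%N -> w set0 = 0 -> pairs_exact R n nl [set t] * w [set t] != 0 ->
  modularity n nl (remove_edges [set l | l != t] w) t = 1 - (nl t)%:R^-1.
Proof.
move=> nl_gt0 w0 single_neq0; set w' := remove_edges _ w.
have w'E T : w' T = if T \subset [set t] then w T else 0.
  by rewrite /w' /remove_edges disjoint_neq_subset1.
have ext0 : exp_external n nl w' t = 0.
  apply: big1 => T tT; rewrite w'E subset1; case: eqP => [TE|_].
    by move: tT; rewrite TE set11.
  by case: eqP => [->|_]; rewrite ?w0 mulr0.
have int_single : exp_internal n nl w' t = pairs_exact R n nl [set t] * w [set t].
  rewrite /exp_internal (bigD1 [set t]) ?set11 //= w'E subxx big1 ?addr0 // => T.
  case/andP=> tT T_neq; rewrite w'E subset1 (negbTE T_neq) /=.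
  by case: eqP => [T0|_]; [move: tT; rewrite T0 inE | rewrite mulr0].
rewrite modularityE // (exp_edges_split _ t) ext0 addr0 ?divff // int_single //.
Qed.

Hypotheses (nl_ge2 : forall l, (2 <= nl l)%N) (n_large : (2 * \prod_l nl l <= n)%N).

Lemma pairs_exact_gt0 (T : {set 'I_L}) : 0 < pairs_exact R n nl T.
Proof.
have nl_gt0 l : (0 < nl l)%N by apply: leq_trans (nl_ge2 l).
have N_gt0 : (0 < \prod_l nl l)%N by rewrite prodn_gt0.
have n_gt0 : 0 < n%:R :> R by rewrite ltr0n (leq_trans _ n_large) // muln_gt0.
rewrite pairs_exactE; apply: mulr_gt0; first exact: divr_gt0.
have [->|_] := eqVneq T setT; last first.
  rewrite subr0; apply/mulr_gt0/mulr_gt0 => //; apply: prodr_gt0 => l _.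
    by rewrite invr_gt0 ltr0n.
  by rewrite subr_gt0 invf_lt1 ?ltr0n // ltr1n.
rewrite setCT big_set0 mulr1 (eq_bigl _ _ (fun l => in_setT l)) prodfV -natr_prod.
rewrite subr_gt0 (@lt_le_trans _ _ 2) ?ltr1n // ler_pdivlMr ?ltr0n //.
by rewrite -natrM ler_nat.
Qed.

Lemma exp_external_gt0 (w : {set 'I_L} -> R) (t a : 'I_L) :
  (forall T, 0 <= w T) -> a != t -> 0 < w [set a] -> 0 < exp_external n nl w t.
Proof.
move=> w_ge0 a_neq_t wa_gt0; rewrite /exp_external (bigD1 [set a]) ?inE 1?eq_sym //=.
apply: ltr_pwDl; first by rewrite mulr_gt0 ?pairs_exact_gt0.
by apply: sumr_ge0 => T _; rewrite mulr_ge0 ?w_ge0 ?ltW ?pairs_exact_gt0.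
Qed.

Lemma modularity_lt (w : {set 'I_L} -> R) (t : 'I_L) :
  (forall T, 0 <= w T) -> 0 < exp_external n nl w t ->
  modularity n nl w t < 1 - (nl t)%:R^-1.
Proof.
move=> w_ge0 ext_gt0.
have int_ge0 : 0 <= exp_internal n nl w t.
  by apply: sumr_ge0 => T _; rewrite mulr_ge0 ?w_ge0 ?ltW ?pairs_exact_gt0.
have E_gt0 : 0 < exp_edges n nl w by rewrite (exp_edges_split _ t) ltr_wpDl.
rewrite modularityE ?gt_eqF ?(leq_trans _ (nl_ge2 t)) // ltrD2r.
by rewrite ltr_pdivrMr // mul1r (exp_edges_split _ t) ltrDl.
Qed.

End ExpectedSBM.

Lemma sbm_prob_set0 (R : realFieldType) (L : nat) (p : 'I_L -> R) :
  sbm_prob p set0 = 0.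
Proof. by rewrite /sbm_prob big_set0 subrr. Qed.

Lemma sbm_prob_set1 (R : realFieldType) (L : nat) (p : 'I_L -> R) (l : 'I_L) :
  sbm_prob p [set l] = p l.
Proof. by rewrite /sbm_prob big_set1 opprB addrC subrK. Qed.

Lemma sbm_prob_ge0 (R : realFieldType) (L : nat) (p : 'I_L -> R) (T : {set 'I_L}) :
  (forall l, 0 <= p l <= 1) -> 0 <= sbm_prob p T.
Proof.
move=> p01; rewrite /sbm_prob subr_ge0; apply: prodr_ile1 => l _.
by case/andP: (p01 l) => p_ge0 p_le1; rewrite subr_ge0 p_le1 gerBl.
Qed.

Theorem theorem13 (R : realFieldType) (n : nat) (nl : 'I_3 -> nat)
  (p : 'I_3 -> R) :
  (forall l, (4 <= nl l)%N) ->
  (forall l, 20%:R^-1 <= p l <= 1) ->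
  (2 * \prod_(l < 3) nl l <= n)%N ->
  forall t : 'I_3,
    modularity n nl (sbm_prob p) t <
    modularity n nl (remove_edges [set l | l != t] (sbm_prob p)) t.
Proof.
move=> nl_ge4 p_bounds n_large t.
have nl_ge2 l : (2 <= nl l)%N by apply: leq_trans (nl_ge4 l).
have p_gt0 l : 0 < p l.
  by case/andP: (p_bounds l) => + _; apply: lt_le_trans; rewrite invr_gt0 ltr0n.
have p01 l : 0 <= p l <= 1 by case/andP: (p_bounds l) => _ ->; rewrite ltW.
pose a : 'I_3 := if t == ord0 then 1 else ord0.
have a_neq_t : a != t by rewrite /a; case: (eqVneq t ord0) => [->|] //; rewrite eq_sym.
rewrite modularity_remove_others ?(leq_trans _ (nl_ge2 t)) ?sbm_prob_set0 //; last first.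
  by rewrite sbm_prob_set1 gt_eqF ?mulr_gt0 ?(pairs_exact_gt0 nl_ge2 n_large).
have w_ge0 T : 0 <= sbm_prob p T by exact: sbm_prob_ge0.
apply: (modularity_lt nl_ge2 n_large) => //.
by apply: (exp_external_gt0 nl_ge2 n_large _ _ a); rewrite ?sbm_prob_set1.
Qed.
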